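(* \[ \sum_{n=0}^\infty\frac{(20n^2-4n-1)\,n^2(2n+1)}{2n-1}\cdot\frac{(-1)^n\binom{2n}{n}^5}{2^{12n}}=-\frac{2}{\pi^2}. \] *)

From Stdlib Require Import Reals.
From Coquelicot Require Import Coquelicot.
Open Scope R_scope.

Definition term16 (n : nat) : R :=
  let x := INR n in
  ((20 * x ^ 2 - 4 * x - 1) * x ^ 2 * (2 * x + 1) / (2 * x - 1))
  * ((-1) ^ n * (Binomial.C (2 * n) n) ^ 5 / 2 ^ (12 * n)).

(* The summand is [- 1/4 G(n, 0)] plus a telescoping difference whose partial sums tend to 0,
   where (F, G) is the WZ pair below: G(n, k+1) - G(n, k) = F(n+1, k) - F(n, k) with F(0, k) = 0
   and F(n, k) -> 0 as n -> oo, so the sum over n of G(n, k) does not depend on k.  Letting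
   k -> oo, the terms with n >= 1 are O(1/k^2), while
   G(0, k) = (binom(2k, k) / 4^k)^4 (8k^2 + 4k + 1) tends to 8/pi^2 by Wallis' formula
   k (binom(2k, k) / 4^k)^2 -> 1/pi.  Hence the sum of G(n, 0) is 8/pi^2. *)

From Stdlib Require Import Reals Lra Lia.
From Coquelicot Require Import Coquelicot.
Open Scope R_scope.

Lemma is_series_telescope (u : nat -> R) (l : R) :
  is_lim_seq u l -> is_series (fun n => u (S n) - u n) (l - u O).
Proof.
  intros Hu.
  assert (Hsum : forall N, sum_f_R0 (fun n => u (S n) - u n) N = u (S N) - u O).
  { induction N as [|N IH]; simpl sum_f_R0.
    - ring.
    - rewrite IH. ring. }
  change (is_lim_seq (sum_n (fun n => u (S n) - u n)) (l - u O)).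
  apply is_lim_seq_ext with (u := fun N => u (S N) - u O).
  { intros N. rewrite sum_n_Reals. symmetry. apply Hsum. }
  apply is_lim_seq_minus'; [apply -> is_lim_seq_incr_1; exact Hu | apply is_lim_seq_const].
Qed.

Section GeometricDomination.
Variables (x : nat -> R) (C q : R).
Hypotheses (Hq : 0 <= q < 1) (Hx : forall n, Rabs (x n) <= C * q ^ n).

Lemma ex_series_geom_dom : ex_series x.
Proof.
  apply (ex_series_le x (fun n => C * q ^ n)); [exact Hx |].
  exists (C * / (1 - q)). apply (is_series_scal_l C (fun n => q ^ n)).
  apply is_series_geom. rewrite Rabs_pos_eq; lra.
Qed.

Lemma Rabs_Series_geom_dom : Rabs (Series x) <= C / (1 - q).
Proof.
  assert (Hg : is_series (fun n => C * q ^ n) (C / (1 - q))).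
  { apply (is_series_scal_l C (fun n => q ^ n)). apply is_series_geom.
    rewrite Rabs_pos_eq; lra. }
  assert (Habs : ex_series (fun n => Rabs (x n))).
  { apply (ex_series_le (V := R_CompleteNormedModule) _ (fun n => C * q ^ n));
      [| eexists; exact Hg].
    intros n. rewrite Rabs_Rabsolu. apply Hx. }
  eapply Rle_trans; [exact (Series_Rabs _ Habs) |].
  rewrite <- (is_series_unique _ _ Hg).
  apply Series_le; [intros n; split; [apply Rabs_pos | apply Hx] | eexists; exact Hg].
Qed.

End GeometricDomination.

Lemma INR_succ_le_geom (n : nat) : INR n + 1 <= 5 * (6 / 5) ^ n.
Proof.
  induction n as [|n IH]; [simpl; lra |].
  rewrite S_INR. simpl pow.
  assert (1 <= (6 / 5) ^ n) by (apply pow_R1_Rle; lra). lra.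
Qed.

Lemma Rabs_le_poly_quarter (x : nat -> R) (C : R) (d : nat) : 0 <= C ->
  (forall n, Rabs (x n) <= C * (INR n + 1) ^ d * (/ 4) ^ n) ->
  forall n, Rabs (x n) <= C * 5 ^ d * ((6 / 5) ^ d / 4) ^ n.
Proof.
  intros HC Hx n. eapply Rle_trans; [apply Hx |].
  replace (C * 5 ^ d * ((6 / 5) ^ d / 4) ^ n) with (C * (5 * (6 / 5) ^ n) ^ d * (/ 4) ^ n).
  - apply Rmult_le_compat_r; [apply pow_le; lra |].
    apply Rmult_le_compat_l; [exact HC |].
    apply pow_incr. pose proof (pos_INR n). pose proof (INR_succ_le_geom n). lra.
  - unfold Rdiv. rewrite !Rpow_mult_distr, <- !pow_mult, Nat.mul_comm. ring.
Qed.

Lemma poly_quarter_ratio_2 : 0 <= (6 / 5) ^ 2 / 4 < 1.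
Proof. simpl. lra. Qed.

Lemma poly_quarter_ratio_5 : 0 <= (6 / 5) ^ 5 / 4 < 1.
Proof. simpl. lra. Qed.

Lemma is_lim_seq_inv_INR_succ : is_lim_seq (fun k => / (INR k + 1)) 0.
Proof.
  pose proof (is_lim_seq_inv INR p_infty is_lim_seq_INR) as H.
  simpl in H. specialize (H ltac:(discriminate)).
  apply is_lim_seq_incr_1 in H. eapply is_lim_seq_ext; [|exact H].
  intros n. cbv beta. rewrite S_INR. reflexivity.
Qed.

Lemma Rabs_mult_le (a b A B : R) : Rabs a <= A -> 0 <= b <= B -> Rabs (a * b) <= A * B.
Proof.
  intros Ha Hb. rewrite Rabs_mult, (Rabs_pos_eq b) by lra.
  apply Rmult_le_compat; auto using Rabs_pos; lra.
Qed.

Definition wallis_integral (n : nat) : R := RInt (fun x => sin x ^ n) 0 (PI / 2).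

Lemma ex_RInt_sin_pow (n : nat) : ex_RInt (fun x => sin x ^ n) 0 (PI / 2).
Proof.
  apply (ex_RInt_continuous (V := R_CompleteNormedModule)). intros z _.
  apply (ex_derive_continuous (K := R_AbsRing) (V := R_NormedModule)). auto_derive. auto.
Qed.

Lemma wallis_integral_0 : wallis_integral 0 = PI / 2.
Proof.
  unfold wallis_integral. change (RInt (fun _ => 1) 0 (PI / 2) = PI / 2).
  rewrite RInt_const. unfold scal; simpl; unfold mult; simpl. ring.
Qed.

Lemma wallis_integral_1 : wallis_integral 1 = 1.
Proof.
  unfold wallis_integral. apply is_RInt_unique.
  replace 1 with (minus (- cos (PI / 2)) (- cos 0))
    by (rewrite cos_PI2, cos_0; unfold minus, plus, opp; simpl; ring).
  apply (is_RInt_derive (V := R_CompleteNormedModule) (fun x => - cos x)).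
  - intros x _. auto_derive; auto. ring.
  - intros x _. apply (ex_derive_continuous (K := R_AbsRing) (V := R_NormedModule)).
    auto_derive. auto.
Qed.

(* Integration by parts, in the form: [- cos x * sin x ^ (n + 1)] is an antiderivative of
   [(n + 2) sin x ^ (n + 2) - (n + 1) sin x ^ n] since [cos x ^ 2 = 1 - sin x ^ 2]. *)
Lemma wallis_integral_SS (n : nat) :
  (INR n + 2) * wallis_integral (S (S n)) = (INR n + 1) * wallis_integral n.
Proof.
  set (f := fun x => (INR n + 2) * sin x ^ S (S n) - (INR n + 1) * sin x ^ n).
  assert (Hparts : is_RInt f 0 (PI / 2)
            (minus (- cos (PI / 2) * sin (PI / 2) ^ S n) (- cos 0 * sin 0 ^ S n))).
  { apply (is_RInt_derive (V := R_CompleteNormedModule) (fun x => - cos x * sin x ^ S n)).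
    - intros x _. auto_derive; auto. unfold f.
      change (match n with 0%nat => 1 | S _ => INR n + 1 end) with (INR (S n)).
      rewrite S_INR. pose proof (sin2_cos2 x) as Hsc. unfold Rsqr in Hsc. simpl pow.
      apply Rminus_diag_uniq.
      transitivity ((INR n + 1) * sin x ^ n * (1 - (sin x * sin x + cos x * cos x)));
        [ring | rewrite Hsc; ring].
    - intros x _. apply (ex_derive_continuous (K := R_AbsRing) (V := R_NormedModule)).
      unfold f. auto_derive. auto. }
  assert (Hlin : is_RInt f 0 (PI / 2)
            (minus (scal (INR n + 2) (wallis_integral (S (S n))))
                   (scal (INR n + 1) (wallis_integral n)))).
  { apply (is_RInt_minus (V := R_NormedModule)); apply (is_RInt_scal (V := R_NormedModule));
      apply (RInt_correct (V := R_CompleteNormedModule)); apply ex_RInt_sin_pow. }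
  apply (is_RInt_unique (V := R_CompleteNormedModule)) in Hparts, Hlin.
  rewrite Hparts, cos_PI2, sin_0 in Hlin.
  unfold minus, plus, opp, scal in Hlin; simpl in Hlin; unfold mult in Hlin; simpl in Hlin.
  lra.
Qed.

Lemma wallis_integral_S_le (n : nat) : wallis_integral (S n) <= wallis_integral n.
Proof.
  pose proof PI_RGT_0.
  apply RInt_le; [lra | apply ex_RInt_sin_pow | apply ex_RInt_sin_pow |].
  intros x Hx. assert (0 <= sin x) by (apply sin_ge_0; lra).
  pose proof (SIN_bound x). assert (0 <= sin x ^ n) by (apply pow_le; lra).
  simpl pow. nra.
Qed.

Lemma C_central_S (n : nat) :
  Binomial.C (2 * S n) (S n) = Binomial.C (2 * n) n * (2 * (2 * INR n + 1) / (INR n + 1)).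
Proof.
  unfold Binomial.C.
  replace (2 * S n)%nat with (S (S (2 * n))) by lia.
  replace (S (S (2 * n)) - S n)%nat with (S n) by lia.
  replace (2 * n - n)%nat with n by lia.
  rewrite !fact_simpl, !mult_INR, !S_INR, mult_INR. simpl (INR 2).
  pose proof (pos_INR n). pose proof (INR_fact_lt_0 n). pose proof (INR_fact_lt_0 (2 * n)).
  field. lra.
Qed.

Definition central_binom_ratio (k : nat) : R := Binomial.C (2 * k) k / 4 ^ k.

Lemma central_binom_ratio_0 : central_binom_ratio 0 = 1.
Proof. unfold central_binom_ratio, Binomial.C. simpl. field. Qed.

Lemma central_binom_ratio_S (k : nat) :
  central_binom_ratio (S k) = central_binom_ratio k * ((2 * INR k + 1) / (2 * INR k + 2)).
Proof.
  unfold central_binom_ratio. rewrite C_central_S. simpl pow.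
  pose proof (pos_INR k). field. repeat split; try apply pow_nonzero; lra.
Qed.

Lemma central_binom_ratio_bounds (k : nat) : 0 < central_binom_ratio k <= 1.
Proof.
  induction k as [|k IH]; [rewrite central_binom_ratio_0; lra |].
  rewrite central_binom_ratio_S. pose proof (pos_INR k).
  assert (0 < (2 * INR k + 1) / (2 * INR k + 2) <= 1).
  { split; [apply Rdiv_lt_0_compat; lra |].
    apply Rmult_le_reg_r with (2 * INR k + 2); [lra |].
    unfold Rdiv. rewrite Rmult_assoc, Rinv_l; lra. }
  split; [apply Rmult_lt_0_compat | rewrite <- (Rmult_1_r 1); apply Rmult_le_compat]; lra.
Qed.

Lemma wallis_integral_even_odd (k : nat) :
  wallis_integral (2 * k) = central_binom_ratio k * (PI / 2) /\
  (2 * INR k + 1) * central_binom_ratio k * wallis_integral (S (2 * k)) = 1.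
Proof.
  induction k as [|k [IHe IHo]].
  - change (2 * 0)%nat with 0%nat.
    rewrite central_binom_ratio_0, wallis_integral_0, wallis_integral_1. simpl. split; ring.
  - replace (2 * S k)%nat with (S (S (2 * k))) by lia.
    pose proof (wallis_integral_SS (2 * k)) as Heven.
    pose proof (wallis_integral_SS (S (2 * k))) as Hodd.
    rewrite mult_INR in Heven. rewrite S_INR, mult_INR in Hodd.
    replace (INR 2) with 2 in Heven, Hodd by (simpl; ring).
    pose proof (pos_INR k). rewrite central_binom_ratio_S, S_INR. split.
    + apply (Rmult_eq_reg_l (2 * INR k + 2)); [rewrite Heven, IHe; field |]; lra.
    + transitivity (central_binom_ratio k * ((2 * INR k + 1) / (2 * INR k + 2))
                    * ((2 * INR k + 1 + 2) * wallis_integral (S (S (S (2 * k)))))); [ring |].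
      rewrite Hodd.
      transitivity ((2 * INR k + 1) * central_binom_ratio k * wallis_integral (S (2 * k)));
        [field; lra | exact IHo].
Qed.

Lemma central_binom_ratio_sq_le (k : nat) : INR k * central_binom_ratio k ^ 2 <= / PI.
Proof.
  pose proof PI_RGT_0. destruct k as [|j].
  { rewrite Rmult_0_l. apply Rlt_le, Rinv_0_lt_compat. lra. }
  destruct (wallis_integral_even_odd j) as [_ Hodd].
  destruct (wallis_integral_even_odd (S j)) as [Heven _].
  pose proof (wallis_integral_S_le (S (2 * j))) as Hle.
  replace (S (S (2 * j))) with (2 * S j)%nat in Hle by lia. rewrite Heven in Hle.
  pose proof (central_binom_ratio_bounds (S j)) as [Hpos _]. pose proof (pos_INR j).
  replace ((2 * INR j + 1) * central_binom_ratio j)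
    with ((2 * INR j + 2) * central_binom_ratio (S j)) in Hodd
    by (rewrite central_binom_ratio_S; field; lra).
  assert (Hmul : (INR j + 1) * central_binom_ratio (S j) ^ 2 * PI
                 <= (2 * INR j + 2) * central_binom_ratio (S j) * wallis_integral (S (2 * j))).
  { assert (0 < (2 * INR j + 2) * central_binom_ratio (S j)) by nra. nra. }
  rewrite S_INR. apply (Rmult_le_reg_r PI); [lra |]. rewrite Rinv_l; lra.
Qed.

Lemma central_binom_ratio_sq_ge (k : nat) :
  / PI * (1 - / (INR k + 1)) <= INR k * central_binom_ratio k ^ 2.
Proof.
  pose proof PI_RGT_0. pose proof (pos_INR k).
  destruct (wallis_integral_even_odd k) as [Heven Hodd].
  pose proof (wallis_integral_S_le (2 * k)) as Hle. rewrite Heven in Hle.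
  pose proof (central_binom_ratio_bounds k) as [Hpos _].
  assert (Hsq : 1 <= (INR k + 1) * PI * central_binom_ratio k ^ 2).
  { assert (0 < (2 * INR k + 1) * central_binom_ratio k) by nra. nra. }
  replace (/ PI * (1 - / (INR k + 1))) with (INR k / ((INR k + 1) * PI)) by (field; lra).
  apply (Rmult_le_reg_r ((INR k + 1) * PI)); [nra |].
  unfold Rdiv. rewrite Rmult_assoc, Rinv_l by nra. nra.
Qed.

Lemma is_lim_seq_wallis : is_lim_seq (fun k => INR k * central_binom_ratio k ^ 2) (/ PI).
Proof.
  apply is_lim_seq_le_le with (u := fun k => / PI * (1 - / (INR k + 1))) (w := fun _ => / PI).
  - intros k. split; [apply central_binom_ratio_sq_ge | apply central_binom_ratio_sq_le].
  - replace (Finite (/ PI)) with (Finite (/ PI * (1 - 0))) by (f_equal; ring).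
    apply (is_lim_seq_scal_l _ (/ PI) (1 - 0)).
    apply is_lim_seq_minus'; [apply is_lim_seq_const | apply is_lim_seq_inv_INR_succ].
  - apply is_lim_seq_const.
Qed.

Lemma is_lim_seq_central_binom_ratio_sq : is_lim_seq (fun k => central_binom_ratio k ^ 2) 0.
Proof.
  pose proof PI_RGT_0.
  apply is_lim_seq_le_le with (u := fun _ => 0) (w := fun k => (/ PI + 1) * / (INR k + 1)).
  - intros k. pose proof (pos_INR k). pose proof (central_binom_ratio_bounds k).
    pose proof (central_binom_ratio_sq_le k).
    split; [apply pow2_ge_0 |].
    apply (Rmult_le_reg_r (INR k + 1)); [lra |].
    rewrite Rmult_assoc, Rinv_l by lra. nra.
  - apply is_lim_seq_const.
  - replace (Finite 0) with (Finite ((/ PI + 1) * 0)) by (f_equal; ring).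
    apply (is_lim_seq_scal_l _ (/ PI + 1) 0), is_lim_seq_inv_INR_succ.
Qed.

(* [wz_term k n] is the hypergeometric term
   (-1)^n (1/2)_n^5 (1/2)_k^4 / (4^n n! (n+k)!^4), generated by its ratio in [n]. *)
Definition wz_ratio (n k : nat) : R :=
  - / 4 * (INR n + / 2) ^ 5 / ((INR n + 1) * (INR n + 1 + INR k) ^ 4).

Fixpoint wz_term (k n : nat) : R :=
  match n with
  | O => central_binom_ratio k ^ 4
  | S n' => wz_term k n' * wz_ratio n' k
  end.

Definition wz_G (k n : nat) : R :=
  wz_term k n
  * (20 * INR n ^ 2 + 8 * INR n + 1 + 24 * INR k * INR n + 8 * INR k ^ 2 + 4 * INR k).

Definition wz_F (k n : nat) : R := wz_term k n * (8 * INR n * (2 * INR n + 4 * INR k + 1)).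

Lemma wz_term_0 (n : nat) :
  wz_term 0 n = (-1) ^ n * Binomial.C (2 * n) n ^ 5 / 2 ^ (12 * n).
Proof.
  induction n as [|n IH].
  - simpl. rewrite central_binom_ratio_0. unfold Binomial.C. simpl. field.
  - simpl wz_term. rewrite IH, C_central_S. unfold wz_ratio.
    replace (12 * S n)%nat with (12 * n + 12)%nat by lia. rewrite pow_add.
    simpl INR. pose proof (pos_INR n). simpl pow. field.
    split; [lra | apply pow_nonzero; lra].
Qed.

Lemma wz_term_Sk (k n : nat) :
  wz_term (S k) n = wz_term k n * ((2 * INR k + 1) / (2 * (INR n + INR k + 1))) ^ 4.
Proof.
  pose proof (pos_INR k).
  induction n as [|n IH]; simpl wz_term.
  - rewrite central_binom_ratio_S. simpl INR. field. lra.
  - rewrite IH. unfold wz_ratio. rewrite !S_INR. pose proof (pos_INR n).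
    field. repeat split; lra.
Qed.

Lemma wz_pair (k n : nat) : wz_G (S k) n - wz_G k n = wz_F k (S n) - wz_F k n.
Proof.
  unfold wz_G, wz_F. rewrite wz_term_Sk. simpl wz_term. unfold wz_ratio. rewrite !S_INR.
  pose proof (pos_INR k). pose proof (pos_INR n). field. repeat split; lra.
Qed.

Lemma Rabs_wz_ratio_le (n k : nat) : Rabs (wz_ratio n k) <= / 4.
Proof.
  unfold wz_ratio. pose proof (pos_INR n). pose proof (pos_INR k).
  set (num := (INR n + / 2) ^ 5). set (den := (INR n + 1) * (INR n + 1 + INR k) ^ 4).
  assert (Hden : 0 < den).
  { apply Rmult_lt_0_compat; [lra | apply pow_lt; lra]. }
  assert (Hnum : 0 <= num <= den).
  { split; [apply pow_le; lra |].
    apply Rle_trans with ((INR n + 1) * (INR n + 1) ^ 4).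
    - replace ((INR n + 1) * (INR n + 1) ^ 4) with ((INR n + 1) ^ 5) by ring.
      apply pow_incr; lra.
    - apply Rmult_le_compat_l; [lra | apply pow_incr; lra]. }
  assert (Hq : 0 <= num / den <= 1).
  { split; [apply Rdiv_le_0_compat; lra |].
    apply (Rmult_le_reg_r den); [lra |]. unfold Rdiv. rewrite Rmult_assoc, Rinv_l; lra. }
  replace (- / 4 * num / den) with (- (/ 4 * (num / den))) by (unfold Rdiv; ring).
  rewrite Rabs_Ropp, Rabs_pos_eq by lra. lra.
Qed.

Lemma Rabs_wz_term_shift (k m n : nat) :
  Rabs (wz_term k (n + m)) <= Rabs (wz_term k m) * (/ 4) ^ n.
Proof.
  induction n as [|n IH]; simpl; [lra |].
  rewrite Rabs_mult.
  replace (Rabs (wz_term k m) * (/ 4 * (/ 4) ^ n)) with (Rabs (wz_term k m) * (/ 4) ^ n * / 4)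
    by ring.
  apply Rmult_le_compat; auto using Rabs_pos, Rabs_wz_ratio_le.
Qed.

Lemma Rabs_wz_term_le (k n : nat) : Rabs (wz_term k n) <= (/ 4) ^ n.
Proof.
  rewrite <- (Nat.add_0_r n).
  eapply Rle_trans; [apply Rabs_wz_term_shift |]. rewrite Nat.add_0_r.
  pose proof (central_binom_ratio_bounds k). change (wz_term k 0) with (central_binom_ratio k ^ 4).
  rewrite Rabs_pos_eq by (apply pow_le; lra).
  rewrite <- (Rmult_1_l ((/ 4) ^ n)) at 2.
  apply Rmult_le_compat_r; [apply pow_le; lra |].
  rewrite <- (pow1 4). apply pow_incr. lra.
Qed.

Lemma Rabs_wz_term_S_le (k n : nat) :
  Rabs (wz_term k (S n)) <= / (INR k + 1) ^ 4 * (/ 4) ^ n.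
Proof.
  rewrite <- Nat.add_1_r.
  eapply Rle_trans; [apply Rabs_wz_term_shift |].
  apply Rmult_le_compat_r; [apply pow_le; lra |].
  pose proof (pos_INR k). pose proof (central_binom_ratio_bounds k).
  assert (0 < (INR k + 1) ^ 4) by (apply pow_lt; lra).
  assert (0 <= central_binom_ratio k ^ 4 <= 1).
  { split; [apply pow_le; lra | rewrite <- (pow1 4); apply pow_incr; lra]. }
  change (wz_term k 1) with (central_binom_ratio k ^ 4 * wz_ratio 0 k).
  unfold wz_ratio. simpl INR.
  replace (central_binom_ratio k ^ 4 * (- / 4 * (0 + / 2) ^ 5 / ((0 + 1) * (0 + 1 + INR k) ^ 4)))
    with (- (central_binom_ratio k ^ 4 / 128 * / (INR k + 1) ^ 4)) by (field; lra).
  assert (0 < / (INR k + 1) ^ 4) by (apply Rinv_0_lt_compat; lra).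
  rewrite Rabs_Ropp, Rabs_pos_eq; nra.
Qed.

Lemma Rabs_wz_G_le (k n : nat) :
  Rabs (wz_G k n) <= 64 * (INR k + 1) ^ 2 * (INR n + 1) ^ 2 * (/ 4) ^ n.
Proof.
  pose proof (pos_INR n) as Hn. pose proof (pos_INR k) as Hk.
  replace (64 * (INR k + 1) ^ 2 * (INR n + 1) ^ 2 * (/ 4) ^ n)
    with ((/ 4) ^ n * (64 * (INR k + 1) ^ 2 * (INR n + 1) ^ 2)) by ring.
  apply Rabs_mult_le; [apply Rabs_wz_term_le |].
  assert (0 <= INR k * INR n) by nra.
  assert (0 <= INR k * INR n * INR n) by nra.
  assert (0 <= INR k * INR k * INR n) by nra.
  assert (0 <= INR k * INR k * INR n * INR n) by nra.
  split; nra.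
Qed.

Lemma Rabs_wz_G_S_le (k n : nat) :
  Rabs (wz_G k (S n)) <= 256 / (INR k + 1) ^ 2 * (INR n + 1) ^ 2 * (/ 4) ^ n.
Proof.
  pose proof (pos_INR n) as Hn. pose proof (pos_INR k) as Hk.
  assert (Hk4 : 0 < (INR k + 1) ^ 2) by (apply pow_lt; lra).
  replace (256 / (INR k + 1) ^ 2 * (INR n + 1) ^ 2 * (/ 4) ^ n)
    with (/ (INR k + 1) ^ 4 * (/ 4) ^ n * (256 * (INR k + 1) ^ 2 * (INR n + 1) ^ 2))
    by (field; lra).
  apply Rabs_mult_le; [apply Rabs_wz_term_S_le |].
  rewrite S_INR.
  assert (0 <= INR k * INR n) by nra.
  assert (0 <= INR k * INR n * INR n) by nra.
  assert (0 <= INR k * INR k * INR n) by nra.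
  assert (0 <= INR k * INR k * INR n * INR n) by nra.
  split; nra.
Qed.

Lemma Rabs_wz_F_le (k n : nat) :
  Rabs (wz_F k n) <= 8 * (4 * INR k + 2) * (INR n + 1) ^ 2 * (/ 4) ^ n.
Proof.
  pose proof (pos_INR n) as Hn. pose proof (pos_INR k) as Hk.
  replace (8 * (4 * INR k + 2) * (INR n + 1) ^ 2 * (/ 4) ^ n)
    with ((/ 4) ^ n * (8 * (4 * INR k + 2) * (INR n + 1) ^ 2)) by ring.
  apply Rabs_mult_le; [apply Rabs_wz_term_le |].
  assert (0 <= INR k * INR n) by nra.
  assert (0 <= INR k * INR n * INR n) by nra.
  split; nra.
Qed.

Lemma ex_series_wz_G (k : nat) : ex_series (wz_G k).
Proof.
  eapply (ex_series_geom_dom _ _ _ poly_quarter_ratio_2).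
  apply Rabs_le_poly_quarter; [| apply Rabs_wz_G_le]. pose proof (pos_INR k). nra.
Qed.

Lemma Series_wz_G_S (k : nat) : Series (wz_G (S k)) = Series (wz_G k).
Proof.
  assert (HF : is_lim_seq (wz_F k) 0).
  { apply ex_series_lim_0. eapply (ex_series_geom_dom _ _ _ poly_quarter_ratio_2).
    apply Rabs_le_poly_quarter; [| apply Rabs_wz_F_le]. pose proof (pos_INR k). lra. }
  assert (Hdiff : is_series (fun n => wz_G (S k) n - wz_G k n) 0).
  { eapply is_series_ext; [intros n; symmetry; apply wz_pair |].
    replace 0 with (0 - wz_F k 0) by (unfold wz_F; simpl; ring).
    apply is_series_telescope, HF. }
  assert (Hminus : is_series (fun n => wz_G (S k) n - wz_G k n)
                     (Series (wz_G (S k)) - Series (wz_G k))).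
  { apply (is_series_minus (wz_G (S k)) (wz_G k)); apply Series_correct, ex_series_wz_G. }
  apply is_series_unique in Hdiff, Hminus. lra.
Qed.

Lemma is_lim_seq_wz_G_head : is_lim_seq (fun k => wz_G k 0) (8 / PI ^ 2).
Proof.
  pose proof PI_RGT_0.
  set (a k := INR k * central_binom_ratio k ^ 2). set (b k := central_binom_ratio k ^ 2).
  apply is_lim_seq_ext with (u := fun k => 8 * (a k * a k) + 4 * (a k * b k) + b k * b k).
  { intros k. unfold wz_G, a, b. change (wz_term k 0) with (central_binom_ratio k ^ 4).
    simpl INR. ring. }
  replace (8 / PI ^ 2) with (8 * (/ PI * / PI) + 4 * (/ PI * 0) + 0 * 0) by (field; lra).
  pose proof is_lim_seq_wallis as Ha. pose proof is_lim_seq_central_binom_ratio_sq as Hb.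
  apply is_lim_seq_plus'; [apply is_lim_seq_plus' |].
  - apply (is_lim_seq_scal_l _ 8 (/ PI * / PI)), is_lim_seq_mult'; assumption.
  - apply (is_lim_seq_scal_l _ 4 (/ PI * 0)), is_lim_seq_mult'; assumption.
  - apply is_lim_seq_mult'; assumption.
Qed.

Lemma is_lim_seq_wz_G_tail : is_lim_seq (fun k => Series (fun n => wz_G k (S n))) 0.
Proof.
  set (K := 256 * 5 ^ 2 / (1 - (6 / 5) ^ 2 / 4)).
  apply is_lim_seq_abs_0.
  apply is_lim_seq_le_le
    with (u := fun _ => 0) (w := fun k => K * (/ (INR k + 1) * / (INR k + 1))).
  - intros k. pose proof (pos_INR k). split; [apply Rabs_pos |].
    replace (K * (/ (INR k + 1) * / (INR k + 1)))
      with (256 / (INR k + 1) ^ 2 * 5 ^ 2 / (1 - (6 / 5) ^ 2 / 4))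
      by (unfold K; field; simpl; lra).
    apply (Rabs_Series_geom_dom _ _ _ poly_quarter_ratio_2).
    apply Rabs_le_poly_quarter; [| apply Rabs_wz_G_S_le].
    apply Rdiv_le_0_compat; [lra | apply pow_lt; lra].
  - apply is_lim_seq_const.
  - replace (Finite 0) with (Finite (K * (0 * 0))) by (f_equal; ring).
    apply (is_lim_seq_scal_l _ K (0 * 0)), is_lim_seq_mult'; apply is_lim_seq_inv_INR_succ.
Qed.

Lemma is_series_wz_G_0 : is_series (wz_G 0) (8 / PI ^ 2).
Proof.
  assert (Hlim : is_lim_seq (fun k => Series (wz_G k)) (8 / PI ^ 2)).
  { apply is_lim_seq_ext with (u := fun k => wz_G k 0 + Series (fun n => wz_G k (S n))).
    - intros k. symmetry. apply Series_incr_1, ex_series_wz_G.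
    - replace (8 / PI ^ 2) with (8 / PI ^ 2 + 0) by ring.
      apply is_lim_seq_plus'; [apply is_lim_seq_wz_G_head | apply is_lim_seq_wz_G_tail]. }
  assert (Hconst : forall k, Series (wz_G k) = Series (wz_G 0)).
  { induction k as [|k IH]; [reflexivity | rewrite Series_wz_G_S; exact IH]. }
  apply is_lim_seq_ext with (v := fun _ => Series (wz_G 0)) in Hlim; [| exact Hconst].
  apply is_lim_seq_unique in Hlim. rewrite Lim_seq_const in Hlim.
  apply Rbar_finite_eq in Hlim. rewrite <- Hlim. apply Series_correct, ex_series_wz_G.
Qed.

Definition term16_telescoper (n : nat) : R :=
  -32 * INR n ^ 5 / (2 * INR n - 1) * wz_term 0 n.

Lemma term16_decomp (n : nat) :
  term16 n = - / 4 * wz_G 0 n + (term16_telescoper (S n) - term16_telescoper n).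
Proof.
  unfold term16. cbv zeta. rewrite <- wz_term_0.
  unfold wz_G, term16_telescoper. simpl wz_term. unfold wz_ratio. rewrite S_INR.
  simpl (INR 0). pose proof (pos_INR n).
  assert (2 * INR n - 1 <> 0).
  { destruct n; [simpl; lra | rewrite S_INR; pose proof (pos_INR n); lra]. }
  field. repeat split; lra.
Qed.

Lemma Rabs_term16_telescoper_le (n : nat) :
  Rabs (term16_telescoper n) <= 32 * (INR n + 1) ^ 5 * (/ 4) ^ n.
Proof.
  pose proof (pos_INR n).
  assert (Hq : Rabs (INR n ^ 5 / (2 * INR n - 1)) <= (INR n + 1) ^ 5).
  { destruct n as [|m].
    - simpl. rewrite Rmult_0_l. unfold Rdiv. rewrite Rmult_0_l, Rabs_R0. lra.
    - rewrite S_INR in *. pose proof (pos_INR m).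
      rewrite Rabs_pos_eq by (apply Rdiv_le_0_compat; [apply pow_le |]; lra).
      apply Rle_trans with ((INR m + 1) ^ 5); [| apply pow_incr; lra].
      apply (Rmult_le_reg_r (2 * (INR m + 1) - 1)); [lra |].
      unfold Rdiv. rewrite Rmult_assoc, Rinv_l by lra.
      assert (0 <= (INR m + 1) ^ 5) by (apply pow_le; lra). nra. }
  unfold term16_telescoper.
  replace (-32 * INR n ^ 5 / (2 * INR n - 1) * wz_term 0 n)
    with (- (32 * (INR n ^ 5 / (2 * INR n - 1)) * wz_term 0 n)) by (unfold Rdiv; ring).
  rewrite Rabs_Ropp, !Rabs_mult, (Rabs_pos_eq 32) by lra.
  pose proof (Rabs_wz_term_le 0 n). pose proof (Rabs_pos (wz_term 0 n)).
  pose proof (Rabs_pos (INR n ^ 5 / (2 * INR n - 1))).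
  rewrite !Rmult_assoc. apply Rmult_le_compat_l; [lra |].
  apply Rmult_le_compat; assumption.
Qed.

Lemma is_lim_seq_term16_telescoper : is_lim_seq term16_telescoper 0.
Proof.
  apply ex_series_lim_0. eapply (ex_series_geom_dom _ _ _ poly_quarter_ratio_5).
  apply Rabs_le_poly_quarter; [| apply Rabs_term16_telescoper_le]. lra.
Qed.

Theorem mainTheorem16 : is_series term16 (- 2 / PI ^ 2).
Proof.
  pose proof PI_RGT_0.
  pose proof (is_series_telescope _ _ is_lim_seq_term16_telescoper) as Htel.
  replace (0 - term16_telescoper 0) with 0 in Htel
    by (unfold term16_telescoper; simpl; unfold Rdiv; ring).
  apply (is_series_ext (fun n => - / 4 * wz_G 0 n
                                 + (term16_telescoper (S n) - term16_telescoper n))).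
  { intros n. symmetry. apply term16_decomp. }
  replace (- 2 / PI ^ 2) with (- / 4 * (8 / PI ^ 2) + 0) by (field; lra).
  apply (is_series_plus _ _ _ _ (is_series_scal_l _ _ _ is_series_wz_G_0) Htel).
Qed.
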